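(* Let $V$ be a $5$-dimensional complex vector space, $G=G(2,V)\subset P(\Lambda^2V)$ Plücker-embedded, $H_1,H_2\subset\Lambda^2V$ hyperplanes, $V_8=H_1\cap H_2$, with $G_4=G\cap P(V_8)$ smooth, and let $\Omega\subset P(V_8)$ be a quadric such that the threefold $X=G_4\cap\Omega$ is smooth everywhere except at one point $t$, which is an ordinary double point. Then there exists a quadric cone $\Omega'\subset P(V_8)$ with vertex $t$ such that $X=G_4\cap\Omega'$. *)

From HB Require Import structures.
From mathcomp Require Import all_boot all_order all_algebra.
From mathcomp Require Import complex reals.

Set Implicit Arguments.
Unset Strict Implicit.
Unset Printing Implicit Defensive.

Import Order.TTheory GRing.Theory Num.Theory.
Local Open Scope ring_scope.

Section Plucker.
Variable C : fieldType.

(* Lambda^2 V, V = C^5, has coordinates p_ij (i<j) indexed by 'I_10 via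
   pos i j = i*(9-i)/2 + (j-i-1):
   (0,1)(0,2)(0,3)(0,4)(1,2)(1,3)(1,4)(2,3)(2,4)(3,4) -> 0..9 . *)
Definition pos (i j : nat) : 'I_10 := inord ((i * (9 - i))./2 + (j - i - 1)).

Definition qf (M : 'M[C]_10) (x : 'rV[C]_10) : C := (x *m M *m x^T) 0 0.
Definition lf (h : 'cV[C]_10) (x : 'rV[C]_10) : C := (x *m h) 0 0.

Definition dqf (M : 'M[C]_10) (x : 'rV[C]_10) : 'cV[C]_10 := (M + M^T) *m x^T.

Definition plmx (i j k l : nat) : 'M[C]_10 :=
  delta_mx (pos i j) (pos k l) - delta_mx (pos i k) (pos j l)
  + delta_mx (pos i l) (pos j k).

(* The five Plücker relations, indexed by the omitted index m of {0,..,4};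
   they generate the ideal of G(2,V) in P(Lambda^2 V). *)
Definition plucker (m : 'I_5) : 'M[C]_10 :=
  match val m with
  | 0 => plmx 1 2 3 4
  | 1 => plmx 0 2 3 4
  | 2 => plmx 0 1 3 4
  | 3 => plmx 0 1 2 4
  | _ => plmx 0 1 2 3
  end.

Definition onG (x : 'rV[C]_10) : Prop := forall m, qf (plucker m) x = 0.

Definition inV8 (h1 h2 : 'cV[C]_10) (x : 'rV[C]_10) : Prop :=
  lf h1 x = 0 /\ lf h2 x = 0.

Definition jacG4 (h1 h2 : 'cV[C]_10) (x : 'rV[C]_10) : 'M[C]_(10, 7) :=
  row_mx (\matrix_(a < 10, m < 5) dqf (plucker m) x a 0) (row_mx h1 h2).

Definition jacX (h1 h2 : 'cV[C]_10) (Q : 'M[C]_10) (x : 'rV[C]_10)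
  : 'M[C]_(10, 8) := row_mx (jacG4 h1 h2 x) (dqf Q x).

(* G_4 is smooth (of dimension 4): at each of its points the Zariski tangent
   space of the affine cone has dimension 5, i.e. the Jacobian has rank 5. *)
Definition G4_smooth (h1 h2 : 'cV[C]_10) : Prop :=
  forall x, x != 0 -> onG x -> inV8 h1 h2 x -> \rank (jacG4 h1 h2 x) = 5%N.

Definition onX (h1 h2 : 'cV[C]_10) (Q : 'M[C]_10) (x : 'rV[C]_10) : Prop :=
  [/\ x != 0, onG x, inV8 h1 h2 x & qf Q x = 0].

(* X (a threefold) is smooth at x: Jacobian of rank 6 = codim of X in P^9 *)
Definition X_smooth_at (h1 h2 : 'cV[C]_10) (Q : 'M[C]_10) (x : 'rV[C]_10)
  : Prop := \rank (jacX h1 h2 Q x) = 6%N.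

(* t is an ordinary double point of X = G_4 \cap Omega, G_4 smooth:
   X is singular at t with Zariski tangent space T_t G_4 (Jacobian rank 5),
   and the local equation of X in the smooth fourfold G_4 has a
   nondegenerate Hessian at t.  The Hessian is the one of the Lagrangian
   Q - sum_m lam_m P_m (with dQ_t = sum lam_m dP_m + mu1 h1 + mu2 h2),
   restricted to the (5-dim, containing t) tangent space T of the affine
   cone, whose rows-span is kermx (jacG4 t); t lies in its radical, so
   nondegeneracy on T/<t> (dimension 4) means rank 4. *)
Definition ordinary_double_point (h1 h2 : 'cV[C]_10) (Q : 'M[C]_10)
  (t : 'rV[C]_10) : Prop :=
  [/\ onX h1 h2 Q t, \rank (jacX h1 h2 Q t) = 5%N &
   exists (lam : 'I_5 -> C) (mu1 mu2 : C),
     dqf Q t = \sum_m lam m *: dqf (plucker m) t + mu1 *: h1 + mu2 *: h2 /\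
     let S := (Q + Q^T) - \sum_m lam m *: (plucker m + (plucker m)^T) in
     let K := kermx (jacG4 h1 h2 t) in
     \rank (K *m S *m K^T) = 4%N].

Definition quadric_in_V8 (h1 h2 : 'cV[C]_10) (Q : 'M[C]_10) : Prop :=
  exists x, inV8 h1 h2 x /\ qf Q x != 0.

Definition cone_with_vertex (h1 h2 : 'cV[C]_10) (Q' : 'M[C]_10)
  (t : 'rV[C]_10) : Prop :=
  [/\ t != 0, inV8 h1 h2 t &
   forall v, inV8 h1 h2 v -> (v *m (Q' + Q'^T) *m t^T) 0 0 = 0].

End Plucker.

(* The Lagrange multipliers of the double point give the quadric
   Q' := Q - sum_m lam_m P_m.  Since the Pluecker quadrics P_m vanish on G,
   Q' cuts out the same X on G_4.  The gradient of Q' at t is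
   dQ_t - sum_m lam_m dP_m = mu1 h1 + mu2 h2, which vanishes on V_8, so t is
   a vertex of Q' restricted to V_8.  Finally the polar form of Q' is the
   Hessian of the Lagrangian, which has rank 4 on the tangent space
   T_t G_4 inside V_8; a quadratic form with nonzero polar form is nonzero,
   so Q' restricts to a genuine quadric of P(V_8). *)
From HB Require Import structures.
From mathcomp Require Import all_boot all_order all_algebra.
From mathcomp Require Import ring.
From mathcomp Require Import complex reals.
Import Order.TTheory GRing.Theory Num.Theory.
Set Implicit Arguments.
Unset Strict Implicit.
Local Open Scope ring_scope.

Section PolarForm.
Variables (C : fieldType) (n : nat).
Implicit Types (A B : 'M[C]_n) (x y : 'rV[C]_n).

Definition bilin A x y : C := (x *m A *m y^T) 0 0.

Lemma bilinD A B x y : bilin (A + B) x y = bilin A x y + bilin B x y.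
Proof. by rewrite /bilin mulmxDr mulmxDl mxE. Qed.

Lemma bilin_tr A x y : bilin A^T x y = bilin A y x.
Proof.
have tr_yAx : (y *m A *m x^T)^T = x *m A^T *m y^T.
  by rewrite !trmx_mul trmxK mulmxA.
by rewrite /bilin -tr_yAx mxE.
Qed.

Lemma bilinDl A x y z : bilin A (x + y) z = bilin A x z + bilin A y z.
Proof. by rewrite /bilin !mulmxDl mxE. Qed.

Lemma bilinDr A x y z : bilin A x (y + z) = bilin A x y + bilin A x z.
Proof. by rewrite /bilin linearD /= mulmxDr mxE. Qed.

Lemma polarization A x y :
  bilin (A + A^T) x y = bilin A (x + y) (x + y) - bilin A x x - bilin A y y.
Proof. by rewrite bilinD bilin_tr !bilinDl !bilinDr; ring. Qed.

Lemma polar_neq0 A x y : bilin (A + A^T) x y != 0 ->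
  [\/ bilin A x x != 0, bilin A y y != 0 | bilin A (x + y) (x + y) != 0].
Proof.
rewrite polarization.
have [->|] := eqVneq (bilin A (x + y) (x + y)) 0; last by move=> ? _; apply: Or33.
have [->|] := eqVneq (bilin A x x) 0; last by move=> ? _; apply: Or31.
have [->|] := eqVneq (bilin A y y) 0; last by move=> ? _; apply: Or32.
by rewrite !subr0 eqxx.
Qed.

End PolarForm.

Section Lagrangian.
Variables (C : fieldType) (h1 h2 : 'cV[C]_10).

Definition lagrangian (Q : 'M[C]_10) (lam : 'I_5 -> C) : 'M[C]_10 :=
  Q - \sum_m lam m *: plucker C m.

Lemma qf_lagrangian Q lam x : onG x -> qf (lagrangian Q lam) x = qf Q x.
Proof.
move=> xG; rewrite /qf /lagrangian mulmxBr mulmxBl mxE [X in _ + X]mxE.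
rewrite mulmx_sumr mulmx_suml summxE big1 ?subr0 // => m _.
by rewrite -scalemxAr -scalemxAl mxE -/(qf _ x) xG mulr0.
Qed.

Lemma onX_lagrangian Q lam x : onX h1 h2 Q x <-> onX h1 h2 (lagrangian Q lam) x.
Proof.
by split=> -[xnz xG xV xQ]; split; rewrite ?qf_lagrangian // -(qf_lagrangian Q lam).
Qed.

Lemma lagrangian_polar Q lam :
  lagrangian Q lam + (lagrangian Q lam)^T
  = (Q + Q^T) - \sum_m lam m *: (plucker C m + (plucker C m)^T).
Proof.
rewrite /lagrangian linearB /= [(\sum_m _)^T]linear_sum /=.
under [in RHS]eq_bigr do rewrite scalerDr.
rewrite big_split /= opprD addrACA.
by congr (_ + (_ - _)); apply: eq_bigr => m _; rewrite linearZ.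
Qed.

Lemma dqf_lagrangian Q lam x :
  dqf (lagrangian Q lam) x = dqf Q x - \sum_m lam m *: dqf (plucker C m) x.
Proof.
rewrite /dqf lagrangian_polar mulmxBl mulmx_suml.
by congr (_ - _); apply: eq_bigr => m _; rewrite scalemxAl.
Qed.

Lemma dqf_lagrangian_multipliers Q lam x r :
  dqf Q x = \sum_m lam m *: dqf (plucker C m) x + r ->
  dqf (lagrangian Q lam) x = r.
Proof. by move=> dQx; rewrite dqf_lagrangian dQx addrC addKr. Qed.

Lemma inV8D x y : inV8 h1 h2 x -> inV8 h1 h2 y -> inV8 h1 h2 (x + y).
Proof. by rewrite /inV8 /lf !mulmxDl !mxE => -[-> ->] [-> ->]; rewrite addr0. Qed.

Lemma kermx_jacG4_inV8 t i : inV8 h1 h2 (row i (kermx (jacG4 h1 h2 t))).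
Proof.
have : kermx (jacG4 h1 h2 t) *m (jacG4 h1 h2 t : 'M_(10, 5 + (1 + 1))) = 0.
  exact: mulmx_ker.
rewrite [X in _ *m X]/jacG4 !mul_mx_row => /eqP; rewrite !row_mx_eq0.
case/and3P=> _ /eqP Kh1 /eqP Kh2.
by rewrite /inV8 /lf -!row_mul Kh1 Kh2 !mxE.
Qed.

Lemma quadric_in_V8_of_polar (M : 'M[C]_10) k (K : 'M[C]_(k, 10)) :
  (forall i, inV8 h1 h2 (row i K)) -> K *m (M + M^T) *m K^T != 0 ->
  quadric_in_V8 h1 h2 M.
Proof.
move=> KV /matrix0Pn[i [j]].
have -> : (K *m (M + M^T) *m K^T) i j = bilin (M + M^T) (row i K) (row j K).
  by rewrite /bilin -row_mul tr_row !mxE; apply: eq_bigr => l _; rewrite !mxE.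
case/polar_neq0=> nz; [exists (row i K) | exists (row j K) | exists (row i K + row j K)].
all: by split=> //; apply: inV8D.
Qed.

Lemma cone_with_vertex_of_dqf (M : 'M[C]_10) t (mu1 mu2 : C) :
  t != 0 -> inV8 h1 h2 t -> dqf M t = mu1 *: h1 + mu2 *: h2 ->
  cone_with_vertex h1 h2 M t.
Proof.
move=> tnz tV dMt; split=> // v [v1 v2].
rewrite -mulmxA -/(dqf M t) dMt mulmxDr -!scalemxAr mxE.
by rewrite [X in X + _]mxE [X in _ + X]mxE -/(lf h1 v) -/(lf h2 v) v1 v2 !mulr0 addr0.
Qed.

End Lagrangian.

Local Open Scope complex_scope.

Theorem lemma5p7 (R : realType) (h1 h2 : 'cV[R[i]]_10) (Q : 'M[R[i]]_10)
  (t : 'rV[R[i]]_10) :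
  \rank (row_mx h1 h2) = 2%N ->
  G4_smooth h1 h2 ->
  quadric_in_V8 h1 h2 Q ->
  ordinary_double_point h1 h2 Q t ->
  (forall x : 'rV[R[i]]_10, onX h1 h2 Q x ->
     (forall c : R[i], x != c *: t) -> X_smooth_at h1 h2 Q x) ->
  exists Q' : 'M[R[i]]_10,
    [/\ quadric_in_V8 h1 h2 Q', cone_with_vertex h1 h2 Q' t &
     forall x : 'rV[R[i]]_10, onX h1 h2 Q x <-> onX h1 h2 Q' x].
Proof.
move=> _ _ _ [[tnz _ tV _] _ [lam [mu1 [mu2 [dQt hessian_rk]]]]] _.
exists (lagrangian Q lam); split; last exact: onX_lagrangian.
- apply: (quadric_in_V8_of_polar (kermx_jacG4_inV8 h1 h2 t)).
  by rewrite -mxrank_eq0 lagrangian_polar hessian_rk.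
- rewrite -addrA in dQt.
  exact: cone_with_vertex_of_dqf tnz tV (dqf_lagrangian_multipliers dQt).
Qed.
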